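(* Let $(M^3,g)$ be a Riemannian $3$-manifold with Ricci tensor $R_{ij}$ and scalar curvature $R$, and let $h$ be a symmetric $2$-tensor on $M$ with trace $H=g^{ij}h_{ij}$. Then at every point \[ |h|^2|\mathrm{Rc}|^2-2RH\,\mathrm{Rc}\cdot h+2R\,\mathrm{Rc}\cdot h^2+\tfrac12R^2\left(H^2-|h|^2\right)\geq0, \] where $\mathrm{Rc}\cdot h=R_{ij}h_{ij}$ and $\mathrm{Rc}\cdot h^2=R_{ij}h_{ik}h_{kj}$ (contractions with respect to $g$).
   Context: Norms and contractions are taken with respect to $g$ (orthonormal frame, repeated indices summed). *)

(* Pointwise algebraic content of the statement:
   in a g-orthonormal frame at a point, Rc and h are symmetric 3x3 real matrices. *)
From HB Require Import structures.
From mathcomp Require Import all_boot all_order all_algebra.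
Set Implicit Arguments. Unset Strict Implicit. Unset Printing Implicit Defensive.
Import Order.TTheory GRing.Theory Num.Theory.
Local Open Scope ring_scope.

Definition contr (R : ringType) (n : nat) (A B : 'M[R]_n) : R :=
  \sum_(i < n) \sum_(j < n) A i j * B i j.

Definition sqnorm (R : ringType) (n : nat) (A : 'M[R]_n) : R := contr A A.

Definition contr_sq (R : ringType) (n : nat) (A B : 'M[R]_n) : R :=
  \sum_(i < n) \sum_(j < n) \sum_(k < n) A i j * B i k * B k j.

From mathcomp Require Import all_boot all_order all_algebra.
From mathcomp Require Import ring.
Import Order.TTheory GRing.Theory Num.Theory.
Local Open Scope ring_scope.

(* Six times the form is a sum of squares,
     6 Q = 2 |H Rc - R h|^2 + |T|^2 + 3 |Rc h - h Rc|^2,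
   where T is the traceless part of 3 (Rc h + h Rc) - R h - 2 H Rc.  For
   symmetric 3x3 matrices this is a polynomial identity in their entries. *)

Lemma big_ord3 (V : nmodType) (F : 'I_3 -> V) :
  \sum_(i < 3) F i = F 0 + F 1 + F 2.
Proof.
rewrite !big_ord_recr big_ord0 /= add0r.
by congr (F _ + F _ + F _); apply: val_inj.
Qed.

Lemma sqnorm_ge0 (R : realDomainType) (n : nat) (A : 'M[R]_n) : 0 <= sqnorm A.
Proof.
rewrite /sqnorm /contr; apply: sumr_ge0 => i _; apply: sumr_ge0 => j _.
by rewrite -expr2 sqr_ge0.
Qed.

Lemma sym_mxE {T : Type} {n : nat} {A : 'M[T]_n} (i j : 'I_n) :
  A^T = A -> A i j = A j i.
Proof. by move=> sA; rewrite -{1}sA mxE. Qed.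

Section RicciQuartic.

Context {R : numFieldType}.
Implicit Types Rc h : 'M[R]_3.

Definition ricci_quartic Rc h : R :=
  sqnorm h * sqnorm Rc - 2 * \tr Rc * \tr h * contr Rc h
  + 2 * \tr Rc * contr_sq Rc h + 2^-1 * \tr Rc ^+ 2 * (\tr h ^+ 2 - sqnorm h).

Lemma ricci_quartic_sos Rc h : Rc^T = Rc -> h^T = h ->
  let Rs := \tr Rc in
  let H := \tr h in
  6 * ricci_quartic Rc h =
    2 * sqnorm (H *: Rc - Rs *: h)
    + sqnorm (3 *: (Rc *m h + h *m Rc) - Rs *: h - (2 * H) *: Rc
              + (Rs * H - 2 * contr Rc h)%:M)
    + 3 * sqnorm (Rc *m h - h *m Rc).
Proof.
move=> sRc sh /=.
rewrite /ricci_quartic /sqnorm /contr /contr_sq /mxtrace !big_ord3 !mxE.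
rewrite ?big_ord3 ?mxE /= ?mulr0n ?mulr1n.
rewrite (sym_mxE 1 0 sRc) (sym_mxE 2 0 sRc) (sym_mxE 2 1 sRc).
rewrite (sym_mxE 1 0 sh) (sym_mxE 2 0 sh) (sym_mxE 2 1 sh).
by field.
Qed.

End RicciQuartic.

Lemma ricci_quartic_ge0 {R : realFieldType} (Rc h : 'M[R]_3) :
  Rc^T = Rc -> h^T = h -> 0 <= ricci_quartic Rc h.
Proof.
move=> sRc sh; have /= sos := ricci_quartic_sos Rc h sRc sh.
rewrite -(pmulr_rge0 _ (ltr0n R 6)) sos.
by apply: addr_ge0; [apply: addr_ge0|]; rewrite ?mulr_ge0 ?sqnorm_ge0.
Qed.

Theorem lemma3 (R : realFieldType) (Rc h : 'M[R]_3) :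
  Rc^T = Rc -> h^T = h ->
  let Rs := \tr Rc in
  let H := \tr h in
  0 <= sqnorm h * sqnorm Rc - 2 * Rs * H * contr Rc h + 2 * Rs * contr_sq Rc h
       + 2^-1 * Rs ^+ 2 * (H ^+ 2 - sqnorm h).
Proof. by move=> sRc sh; apply: ricci_quartic_ge0. Qed.
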